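(* Let $\rho>1$ and $\Psi=\{1,\rho,\rho^2,\dots\}$. For every $\varepsilon>0$, every $n\in\mathbb{N}$ and every function $h:\mathbb{N}\to\mathbb{N}$ with $h(n)\ge n$, there exists a finite set $W\subset\Psi$ with the following property: for every $\alpha\ge 1$ and every randomized algorithm $a$ for the single secretary problem with $n$ items that is $\alpha$-probability competitive over $W$, there exist another randomized algorithm $a'$ for the same problem that is also $\alpha$-probability competitive over $W$, and a set $W'\subseteq W$ with $|W'|=h(n)$, such that $a'$ is $\varepsilon$-value-oblivious on $W'$.
   Context: Single secretary problem with $n$ items: an instance is a set of $n$ pairwise distinct positive reals presented in uniformly random order. A randomized algorithm $a$ is a family of functions $a_i$, $i\in[n]$, where $a_i(v_1,\dots,v_i)\in[0,1]$ is the probability that $a$ stops at time $i$ and accepts $v_i$, given that the values seen so far are $v_1,\dots,v_i$ in this order and it has not stopped earlier. An algorithm is $\alpha$-probability competitive over a finite set $W$ if for every instance consisting of $n$ pairwise distinct elements of $W$, the probability (over the random order and internal randomness) that it accepts the maximum element is at least $1/\alpha$. An algorithm is $\varepsilon$-value-oblivious on a set $W'$ if for every $i\in[n]$ there is $q_i\in[0,1]$ such that for all pairwise distinct $v_1,\dots,v_i\in W'$ with $v_i>\max\{v_1,\dots,v_{i-1}\}$ we have $a_i(v_1,\dots,v_i)\in[q_i-\varepsilon,q_i+\varepsilon)$. *)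

From HB Require Import structures.
From mathcomp Require Import all_boot all_order all_algebra all_fingroup.
From mathcomp Require Import reals.
Set Implicit Arguments. Unset Strict Implicit. Unset Printing Implicit Defensive.
Import Order.TTheory GRing.Theory Num.Theory.
Local Open Scope ring_scope.

Section Secretary.
Variable R : realType.

(* A randomized algorithm is a function a : seq R -> R; a [:: v_1; ...; v_i]
   is a_i(v_1,...,v_i), the probability of stopping at time i and accepting
   v_i, given not stopped earlier. *)
Definition is_alg (n : nat) (a : seq R -> R) : Prop :=
  forall s : seq R, (0 < size s <= n)%N -> 0 <= a s <= 1.

Definition order_seq (n : nat) (x : 'I_n -> R) (s : 'S_n) : seq R :=
  [seq x (s k) | k <- enum 'I_n].

(* Probability (over a uniformly random order and internal randomness) that
   a accepts the maximum of the instance x.  At (0-based) time i the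
   algorithm stops with probability prod_{j<i} (1 - a_{j+1}) * a_{i+1}. *)
Definition win_prob (n : nat) (a : seq R -> R) (x : 'I_n -> R) : R :=
  (n`!%:R)^-1 * \sum_(s : 'S_n) \sum_(i < n)
     (if [forall j, x j <= x (s i)] then
        (\prod_(j < i) (1 - a (take j.+1 (order_seq x s))))
          * a (take i.+1 (order_seq x s))
      else 0).

Definition prob_competitive (n : nat) (alpha : R) (W : seq R) (a : seq R -> R) : Prop :=
  forall x : 'I_n -> R, injective x -> (forall i, x i \in W) ->
    alpha^-1 <= win_prob a x.

Definition value_oblivious (n : nat) (eps : R) (W' : seq R) (a : seq R -> R) : Prop :=
  forall i : nat, (1 <= i <= n)%N ->
    exists q : R, 0 <= q <= 1 /\
      forall v : seq R, size v = i -> uniq v -> (forall w, w \in v -> w \in W') ->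
        (forall j : nat, (j < i.-1)%N -> nth 0 v j < nth 0 v i.-1) ->
        q - eps <= a v < q + eps.

Definition in_Psi (rho w : R) : Prop := exists k : nat, w = rho ^+ k.

End Secretary.

From HB Require Import structures.
From mathcomp Require Import all_boot all_order all_algebra all_fingroup.
From mathcomp Require Import reals zify ring lra.
Set Implicit Arguments. Unset Strict Implicit. Unset Printing Implicit Defensive.
Import Order.TTheory GRing.Theory Num.Theory.

(* Replace a by the algorithm a' that, at time i, accepts with the conditional
   probability that a accepts, given the values seen so far as a set and the
   current value, when the earlier values arrive in uniformly random order.
   Both the probability of reaching time i and the success event at time i are
   invariant under reordering the first i - 1 arrivals, so a' wins every
   instance with the same probability as a.  On W = {rho^k : k < N} the values
   of a' on increasing sequences then depend only on an i-subset of W.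
   Rounding them down to multiples of 1/K with 1/K < eps gives finitely many
   colours, and the hypergraph Ramsey theorem, applied for every i <= n at
   once, yields W' of size h(n) on which a' is constant up to eps at each
   time i. *)

(* The r-subsets of a duplicate-free sequence G are its subsequences of size r. *)
Definition colours_below (f : seq nat -> nat) (r c : nat) (G : seq nat) :=
  forall T, subseq T G -> size T = r -> f T < c.

Definition monochromatic (f : seq nat -> nat) (r c : nat) (M : seq nat) :=
  exists2 c0, c0 < c & forall T, subseq T M -> size T = r -> f T = c0.

Definition ramsey_property (r : nat) := forall c m, 0 < c -> exists N, forall G f,
  N <= size G -> colours_below f r c G ->
  exists M, [/\ subseq M G, size M = m & monochromatic f r c M].

Lemma colours_below_subseq f r c G M :
  colours_below f r c G -> subseq M G -> colours_below f r c M.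
Proof. by move=> fG MG T TM; apply: fG; apply: subseq_trans TM MG. Qed.

Lemma monochromatic_subseq f r c M M' :
  monochromatic f r c M -> subseq M' M -> monochromatic f r c M'.
Proof.
by case=> c0 c0c fM M'M; exists c0 => // T TM'; apply: fM; apply: subseq_trans TM' M'M.
Qed.

Lemma ramsey_property0 : ramsey_property 0.
Proof.
move=> c m c_gt0; exists m => G f mG fG; exists (take m G); split.
- exact: take_subseq.
- by rewrite size_takel.
- exists (f [::]); first by apply: fG; rewrite ?sub0seq.
  by move=> T _ /size0nil ->.
Qed.

(* Each x in xs colours all r-subsets of the elements after it with the same
   colour, recorded in cs; an (r+1)-subset of xs thus has the colour of its
   first element. *)
Fixpoint end_homogeneous (f : seq nat -> nat) r c (xs cs : seq nat) : Prop :=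
  match xs, cs with
  | [::], [::] => True
  | x :: xs', c0 :: cs' => [/\ c0 < c,
        (forall T, subseq T xs' -> size T = r -> f (x :: T) = c0) &
        end_homogeneous f r c xs' cs']
  | _, _ => False
  end.

Lemma end_homogeneous_size f r c xs cs :
  end_homogeneous f r c xs cs -> size cs = size xs.
Proof. by elim: xs cs => [|x xs IH] [|c1 cs] //= [_ _ /IH ->]. Qed.

Lemma end_homogeneous_colours f r c xs cs :
  end_homogeneous f r c xs cs -> all (fun y => y < c) cs.
Proof. by elim: xs cs => [|x xs IH] [|c1 cs] //= [-> _ /IH ->]. Qed.

Lemma end_homogeneous_mask f r c xs cs c0 : end_homogeneous f r c xs cs ->
  forall T, subseq T (mask (map (pred1 c0) cs) xs) -> size T = r.+1 -> f T = c0.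
Proof.
elim: xs cs => [|x xs IH] [|c1 cs] //=; first by move=> _ T /eqP ->.
case=> _ fx hom T; case: eqP => [c10|_]; last by move=> TM rT; apply: (IH cs hom).
subst c1; case: T => // y T /=; case: eqP => [->|_] TM [rT].
  by apply: fx => //; apply: subseq_trans TM (mask_subseq _ _).
by apply: (IH cs hom) => //=; rewrite rT.
Qed.

Lemma pigeonhole_count m c cs : all (fun y => y < c) cs -> c * m < size cs ->
  exists2 c0, c0 < c & m < count (pred1 c0) cs.
Proof.
elim: c cs => [|c IH] cs cs_lt szcs.
  by move: cs_lt szcs; case: cs => //= y cs /andP[].
have [mc|cm] := ltnP m (count (pred1 c) cs); first by exists c.
have [||c0 c0c] := IH (filter (predC (pred1 c)) cs).
- rewrite all_filter; apply/allP => y ycs /=; apply/implyP => yc.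
  by move/allP: cs_lt => /(_ y ycs); rewrite ltnS leq_eqVlt (negPf yc).
- rewrite mulSn in szcs; rewrite size_filter -(ltn_add2l m); apply: leq_trans szcs _.
  by rewrite -(count_predC (pred1 c) cs) leq_add2r.
rewrite count_filter => mc0; exists c0; first lia.
by apply: leq_trans mc0 _; apply: sub_count => y /andP[].
Qed.

Lemma end_homogeneous_exists r c L : ramsey_property r -> 0 < c -> exists N,
  forall G f, N <= size G -> colours_below f r.+1 c G ->
  exists xs cs, [/\ subseq xs G, size xs = L & end_homogeneous f r c xs cs].
Proof.
move=> ramsey_r c_gt0; elim: L => [|L [NL HL]].
  by exists 0 => G f _ _; exists [::], [::]; rewrite sub0seq.
have [N' HN'] := ramsey_r c NL c_gt0.
exists N'.+1 => [[|x G]] f //= NG fxG.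
have fG : colours_below (fun T => f (x :: T)) r c G.
  by move=> T TG rT; apply: fxG; rewrite /= ?eqxx ?rT.
have [M [MG sizeM [c0 c0c fM]]] := HN' G _ NG fG.
have fM' : colours_below f r.+1 c M.
  by apply: colours_below_subseq fxG _; apply: subseq_trans MG (subseq_cons _ _).
have [xs [cs [xsM sizexs hom]]] := HL M f (eq_leq (esym sizeM)) fM'.
exists (x :: xs), (c0 :: cs); split => /=.
- by rewrite eqxx; apply: subseq_trans xsM MG.
- by rewrite sizexs.
- by split=> // T Txs rT; apply: fM => //; apply: subseq_trans Txs xsM.
Qed.

Lemma ramsey_propertyS r : ramsey_property r -> ramsey_property r.+1.
Proof.
move=> ramsey_r c m c_gt0; have [N HN] := end_homogeneous_exists (c * m).+1 ramsey_r c_gt0.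
exists N => G f NG fG; have [xs [cs [xsG sizexs hom]]] := HN G f NG fG.
have [|c0 c0c mc0] := @pigeonhole_count m c cs (end_homogeneous_colours hom).
  by rewrite (end_homogeneous_size hom) sizexs.
exists (take m (mask (map (pred1 c0) cs) xs)); split.
- by apply: subseq_trans (take_subseq _ _) _; apply: subseq_trans (mask_subseq _ _) xsG.
- by rewrite size_takel // size_mask ?size_map ?(end_homogeneous_size hom) // count_map ltnW.
- exists c0 => // T TM rT; apply: (end_homogeneous_mask hom) => //.
  exact: subseq_trans TM (take_subseq _ _).
Qed.

Theorem ramsey r : ramsey_property r.
Proof. by elim: r => [|r IH]; [exact: ramsey_property0 | exact: ramsey_propertyS]. Qed.

Lemma ramsey_upto n c m : 0 < c -> exists N, forall G f, N <= size G ->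
  (forall r, 0 < r <= n -> colours_below f r c G) ->
  exists M, [/\ subseq M G, size M = m & forall r, 0 < r <= n -> monochromatic f r c M].
Proof.
move=> c_gt0; elim: n m => [|n IH] m.
  exists m => G f mG _; exists (take m G); split; first exact: take_subseq.
  - by rewrite size_takel.
  - by move=> r; lia.
have [Nn HNn] := IH m; have [N HN] := ramsey n.+1 Nn c_gt0.
exists N => G f NG fG.
have [M1 [M1G sizeM1 homM1]] := HN G f NG (fG n.+1 (leqnn _)).
have fM1 r : 0 < r <= n -> colours_below f r c M1.
  by move=> rn; apply: colours_below_subseq M1G; apply: fG; lia.
have [M [MM1 sizeM homM]] := HNn M1 f (eq_leq (esym sizeM1)) fM1.
exists M; split => //; first exact: subseq_trans MM1 M1G.
move=> r rn; have [nr|rn'] := ltnP n r; last by apply: homM; lia.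
have -> : r = n.+1 by lia.
exact: monochromatic_subseq homM1 MM1.
Qed.

(* A permutation of 'I_i acts on the first i positions of longer sequences:
   as a map on nat fixing every k >= i, and as a permutation of 'I_n. *)
Section PermExtension.
Variable i : nat.

Definition ext_nat (s : 'S_i) (k : nat) : nat :=
  if (insub k : option 'I_i) is Some k' then val (s k') else k.

Lemma ext_natE (s : 'S_i) k (ki : k < i) : ext_nat s k = s (Ordinal ki).
Proof. by rewrite /ext_nat insubT. Qed.

Lemma ext_nat_id (s : 'S_i) k : i <= k -> ext_nat s k = k.
Proof. by move=> ik; rewrite /ext_nat insubN // -leqNgt. Qed.

Lemma ext_nat_lt (s : 'S_i) k m : i <= m -> k < m -> ext_nat s k < m.
Proof.
move=> im km; have [ki|ik] := ltnP k i; last by rewrite ext_nat_id.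
by rewrite (ext_natE s ki); apply: leq_trans im.
Qed.

Lemma ext_nat_inj (s : 'S_i) : injective (ext_nat s).
Proof.
move=> k1 k2; have [k1i|ik1] := ltnP k1 i; have [k2i|ik2] := ltnP k2 i.
- by rewrite !ext_natE => /val_inj /perm_inj [].
- by rewrite (ext_nat_id s ik2) => e; move: (ext_nat_lt s (leqnn i) k1i); rewrite e; lia.
- by rewrite (ext_nat_id s ik1) => e; move: (ext_nat_lt s (leqnn i) k2i); rewrite -e; lia.
- by rewrite !ext_nat_id.
Qed.

Lemma ext_natM (s t : 'S_i) k : ext_nat (s * t) k = ext_nat t (ext_nat s k).
Proof.
have [ki|ik] := ltnP k i; last by rewrite !ext_nat_id.
rewrite (ext_natE (s * t) ki) permM (ext_natE s ki) (ext_natE t (ltn_ord (s (Ordinal ki)))).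
by congr (val (t _)); apply: val_inj.
Qed.

Variable n : nat.

Definition ext_perm_fun (s : 'S_i) (k : 'I_n) : 'I_n :=
  if i <= n then insubd k (ext_nat s k) else k.

Lemma ext_perm_fun_inj (s : 'S_i) : injective (ext_perm_fun s).
Proof.
move=> k1 k2; rewrite /ext_perm_fun; case: ifP => // i_le_n /(congr1 val).
rewrite !val_insubd !ext_nat_lt //.
by move/ext_nat_inj/val_inj.
Qed.

Definition ext_perm (s : 'S_i) : 'S_n := perm (@ext_perm_fun_inj s).

Lemma ext_permE (s : 'S_i) (k : 'I_n) : i <= n -> val (ext_perm s k) = ext_nat s k.
Proof. by move=> i_le_n; rewrite permE /ext_perm_fun i_le_n val_insubd ext_nat_lt. Qed.

Lemma ext_perm_id (s : 'S_i) (k : 'I_n) : i <= n -> i <= k -> ext_perm s k = k.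
Proof. by move=> i_le_n ik; apply: val_inj; rewrite ext_permE // ext_nat_id. Qed.

End PermExtension.

Lemma ext_perm_ext i m n (s : 'S_i) : i <= m -> m <= n ->
  ext_perm n s = ext_perm n (ext_perm m s).
Proof.
move=> im mn; apply/permP => k; apply: val_inj.
rewrite !ext_permE //; last exact: leq_trans mn.
have [km|mk] := ltnP k m; first by rewrite [RHS](ext_natE _ km) ext_permE.
by rewrite !ext_nat_id //; apply: leq_trans mk.
Qed.

Local Open Scope ring_scope.

Section Symmetrize.
Variable R : realType.
Variable a : seq R -> R.

Definition permute_prefix i (s : 'S_i) (v : seq R) : seq R :=
  mkseq (fun k => nth 0 v (ext_nat s k)) (size v).

Definition survival (w : seq R) : R :=
  \prod_(j < (size w).-1) (1 - a (take j.+1 w)).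

Definition sym_num i (v : seq R) : R :=
  \sum_(s : 'S_i) survival (permute_prefix s v) * a (permute_prefix s v).

Definition sym_den i (v : seq R) : R :=
  \sum_(s : 'S_i) survival (permute_prefix s v).

(* The probability that a stops at the last entry of v given that it reaches
   it, when the entries before it arrive in uniformly random order; when the
   event of reaching it has probability 0, this is 0 (x / 0 = 0). *)
Definition symmetrize (v : seq R) : R :=
  sym_num (size v).-1 v / sym_den (size v).-1 v.

Lemma size_permute_prefix i (s : 'S_i) v : size (permute_prefix s v) = size v.
Proof. by rewrite size_mkseq. Qed.

Lemma nth_permute_prefix i (s : 'S_i) v k : (k < size v)%N ->
  nth 0 (permute_prefix s v) k = nth 0 v (ext_nat s k).
Proof. by move=> kv; rewrite nth_mkseq. Qed.

Lemma permute_prefixM i (s t : 'S_i) v : size v = i.+1 ->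
  permute_prefix s (permute_prefix t v) = permute_prefix (s * t) v.
Proof.
move=> sizev; apply: (@eq_from_nth _ 0); rewrite !size_permute_prefix // => k kv.
rewrite !nth_permute_prefix ?size_permute_prefix ?ext_natM //.
by apply: ext_nat_lt kv; rewrite sizev.
Qed.

Lemma sym_num_permute i (t : 'S_i) v : size v = i.+1 ->
  sym_num i (permute_prefix t v) = sym_num i v.
Proof.
move=> sizev; rewrite /sym_num [RHS](reindex_inj (mulIg t)) /=.
by apply: eq_bigr => s _; rewrite permute_prefixM.
Qed.

Lemma sym_den_permute i (t : 'S_i) v : size v = i.+1 ->
  sym_den i (permute_prefix t v) = sym_den i v.
Proof.
move=> sizev; rewrite /sym_den [RHS](reindex_inj (mulIg t)) /=.
by apply: eq_bigr => s _; rewrite permute_prefixM.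
Qed.

Lemma symmetrizeE i v : size v = i.+1 -> symmetrize v = sym_num i v / sym_den i v.
Proof. by rewrite /symmetrize => ->. Qed.

Lemma symmetrize_permute i (t : 'S_i) v : size v = i.+1 ->
  symmetrize (permute_prefix t v) = symmetrize v.
Proof.
move=> sizev; rewrite !(symmetrizeE (i := i)) ?size_permute_prefix //.
by rewrite sym_num_permute // sym_den_permute.
Qed.

Lemma rcons_permute_prefix (p p' : seq R) m : perm_eq p p' ->
  exists t : 'S_(size p'), rcons p m = permute_prefix t (rcons p' m).
Proof.
move=> pp'; have sizep := perm_size pp'.
have /tuple_permP [t pt] : perm_eq p (in_tuple p') := pp'.
exists t; apply: (@eq_from_nth _ 0);
  rewrite ?size_permute_prefix ?size_rcons ?sizep // => k kp.
rewrite nth_permute_prefix ?size_rcons // !nth_rcons sizep.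
have [kp'|p'k] := ltnP k (size p'); last by rewrite ext_nat_id // ltnNge p'k.
rewrite (ext_natE t kp') ltn_ord pt (nth_map (Ordinal kp')) ?size_enum_ord //.
have -> : nth (Ordinal kp') (enum 'I_(size p')) k = Ordinal kp'.
  by apply: val_inj; rewrite /= nth_enum_ord.
by rewrite (tnth_nth 0).
Qed.

Lemma symmetrize_perm_rcons (p p' : seq R) m : perm_eq p p' ->
  symmetrize (rcons p m) = symmetrize (rcons p' m).
Proof.
by case/(rcons_permute_prefix m) => t ->; rewrite symmetrize_permute // size_rcons.
Qed.

Lemma symmetrize_perm_last (v w : seq R) : perm_eq v w ->
  nth 0 v (size v).-1 = nth 0 w (size w).-1 -> symmetrize v = symmetrize w.
Proof.
case/lastP: v => [|p m]; case/lastP: w => [|p' m'] //;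
  try by move/perm_size; rewrite size_rcons.
rewrite !nth_last !last_rcons => pw mm'; subst m'; apply: symmetrize_perm_rcons.
by rewrite -(perm_cat2r [:: m]) !cats1.
Qed.

End Symmetrize.

Section SymmetrizeAlgorithm.
Variable R : realType.
Variable n : nat.
Variable a : seq R -> R.
Hypothesis a_alg : is_alg n a.

Lemma survival_ge0 w : (size w <= n)%N -> 0 <= survival a w.
Proof.
move=> wn; apply: prodr_ge0 => j _; rewrite subr_ge0.
have /a_alg /andP[_ -> //] : (0 < size (take j.+1 w) <= n)%N.
by rewrite size_takel; have := ltn_ord j; lia.
Qed.

Lemma sym_num_ge0 i v : size v = i.+1 -> (i < n)%N -> 0 <= sym_num a i v.
Proof.
move=> sizev i_lt_n; apply: sumr_ge0 => s _.
have sv : (0 < size (permute_prefix s v) <= n)%N by rewrite size_permute_prefix sizev.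
by rewrite mulr_ge0 ?survival_ge0 //; [case/andP: sv | case/andP: (a_alg sv)].
Qed.

Lemma sym_num_le_den i v : size v = i.+1 -> (i < n)%N -> sym_num a i v <= sym_den a i v.
Proof.
move=> sizev i_lt_n; apply: ler_sum => s _.
have sv : (0 < size (permute_prefix s v) <= n)%N by rewrite size_permute_prefix sizev.
rewrite -[leRHS]mulr1 ler_wpM2l ?survival_ge0 //; first by case/andP: sv.
by case/andP: (a_alg sv).
Qed.

Lemma symmetrize_mul_den i v : size v = i.+1 -> (i < n)%N ->
  symmetrize a v * sym_den a i v = sym_num a i v.
Proof.
move=> sizev i_lt_n; rewrite (symmetrizeE a sizev).
have [den0|] := eqVneq (sym_den a i v) 0; last by move=> den_neq0; rewrite divfK.
rewrite den0 mulr0; apply/esym/eqP; rewrite eq_le sym_num_ge0 // andbT.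
by rewrite -den0 sym_num_le_den.
Qed.

Lemma symmetrize_alg : is_alg n (symmetrize a).
Proof.
move=> v vn; have sizev : size v = (size v).-1.+1 by lia.
have i_lt_n : ((size v).-1 < n)%N by lia.
have num_ge0 := sym_num_ge0 sizev i_lt_n.
have num_le_den := sym_num_le_den sizev i_lt_n.
rewrite (symmetrizeE a sizev) divr_ge0 //=; last exact: le_trans num_le_den.
have [->|den_neq0] := eqVneq (sym_den a (size v).-1 v) 0; first by rewrite invr0 mulr0.
by rewrite ler_pdivrMr ?mul1r // lt_def den_neq0 (le_trans num_ge0).
Qed.

End SymmetrizeAlgorithm.

Section WinProb.
Variable R : realType.
Variable n : nat.
Variable x : 'I_n -> R.

Lemma size_order_seq s : size (order_seq x s) = n.
Proof. by rewrite size_map size_enum_ord. Qed.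

Lemma nth_order_seq s k (kn : (k < n)%N) : nth 0 (order_seq x s) k = x (s (Ordinal kn)).
Proof.
rewrite /order_seq (nth_map (Ordinal kn)) ?size_enum_ord //.
by congr (x (s _)); apply: val_inj; rewrite /= nth_enum_ord.
Qed.

Definition arrivals i s := take i.+1 (order_seq x s).

Definition reach (b : seq R -> R) i s := \prod_(j < i) (1 - b (take j.+1 (order_seq x s))).

Definition prefix_invariant i (F : 'S_n -> R) :=
  forall (t : 'S_i) s, F (ext_perm n t * s)%g = F s.

Lemma size_arrivals i s : (i < n)%N -> size (arrivals i s) = i.+1.
Proof. by move=> i_lt_n; rewrite size_takel // size_order_seq. Qed.

Lemma reachS b i s : reach b i.+1 s = reach b i s * (1 - b (arrivals i s)).
Proof. by rewrite /reach big_ord_recr. Qed.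

Lemma reach_survival b i s : (i < n)%N -> reach b i s = survival b (arrivals i s).
Proof.
move=> i_lt_n; rewrite /survival size_arrivals //=; apply: eq_bigr => j _.
by rewrite /arrivals take_takel // ltnS ltnW.
Qed.

Lemma arrivals_ext_perm i (t : 'S_i) s : (i < n)%N ->
  arrivals i (ext_perm n t * s)%g = permute_prefix t (arrivals i s).
Proof.
move=> i_lt_n; apply: (@eq_from_nth _ 0);
  rewrite ?size_permute_prefix !size_arrivals // => k ki.
have kn : (k < n)%N by apply: leq_trans ki i_lt_n.
have tkn : (ext_nat t k < n)%N by apply: ext_nat_lt (ltnW i_lt_n) kn.
rewrite nth_permute_prefix ?size_arrivals // /arrivals !nth_take ?(ext_nat_lt _ _ ki) //.
rewrite !nth_order_seq permM; congr (x (s _)); apply: val_inj.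
by rewrite ext_permE //; apply: ltnW.
Qed.

Lemma prefix_invariant_mono i F : (i < n)%N -> prefix_invariant i.+1 F -> prefix_invariant i F.
Proof. by move=> i_lt_n F_inv t s; rewrite (@ext_perm_ext i i.+1 n t). Qed.

Lemma sum_perm_average (G : 'S_n -> R) i :
  \sum_s G s = (i`!%:R)^-1 * \sum_s \sum_(t : 'S_i) G (ext_perm n t * s)%g.
Proof.
rewrite exchange_big /=.
have -> : \sum_(t : 'S_i) \sum_s G (ext_perm n t * s)%g = \sum_(t : 'S_i) \sum_s G s.
  by apply: eq_bigr => t _; rewrite [RHS](reindex_inj (mulgI (ext_perm n t))).
rewrite sumr_const card_Sn -(mulr_natl (\sum_s G s)) mulrA mulVf ?mul1r //.
by rewrite pnatr_eq0 -lt0n fact_gt0.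
Qed.

Variable a : seq R -> R.
Hypothesis a_alg : is_alg n a.

(* Averaging over the orders of the first i arrivals turns reach a into
   sym_den and reach a * a into sym_num. *)
Lemma sum_stop_symmetrize i F : (i < n)%N -> prefix_invariant i F ->
  \sum_s reach a i s * symmetrize a (arrivals i s) * F s =
  \sum_s reach a i s * a (arrivals i s) * F s.
Proof.
move=> i_lt_n F_inv; rewrite (sum_perm_average _ i) [RHS](sum_perm_average _ i).
congr (_ * _); apply: eq_bigr => s _.
have reach_ext (t : 'S_i) :
    reach a i (ext_perm n t * s)%g = survival a (permute_prefix t (arrivals i s)).
  by rewrite reach_survival // arrivals_ext_perm.
under eq_bigr => t _ do
  rewrite reach_ext F_inv arrivals_ext_perm // symmetrize_permute ?size_arrivals //.
under [RHS]eq_bigr => t _ do rewrite reach_ext F_inv arrivals_ext_perm //.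
rewrite -!mulr_suml; congr (_ * _).
by rewrite mulrC (symmetrize_mul_den a_alg) ?size_arrivals.
Qed.

Lemma sum_reach_symmetrize i F : (i <= n)%N -> prefix_invariant i F ->
  \sum_s reach (symmetrize a) i s * F s = \sum_s reach a i s * F s.
Proof.
elim: i F => [|i IH] F i_le_n F_inv; first by apply: eq_bigr => s _; rewrite /reach !big_ord0.
have F_inv' := prefix_invariant_mono i_le_n F_inv.
under eq_bigr => s _ do rewrite reachS -mulrA.
rewrite (IH (fun s => (1 - symmetrize a (arrivals i s)) * F s)) ?(ltnW i_le_n) //; last first.
  by move=> t s /=; rewrite arrivals_ext_perm // symmetrize_permute ?size_arrivals // F_inv'.
transitivity (\sum_s reach a i s * F s
  - \sum_s reach a i s * symmetrize a (arrivals i s) * F s).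
  by rewrite -sumrB; apply: eq_bigr => s _; ring.
by rewrite sum_stop_symmetrize // -sumrB; apply: eq_bigr => s _; rewrite reachS; ring.
Qed.

(* The success event at time i only depends on where the maximum arrives,
   which is invariant under reordering the first i arrivals. *)
Lemma win_prob_symmetrize : win_prob (symmetrize a) x = win_prob a x.
Proof.
rewrite /win_prob; congr (_ * _); rewrite exchange_big [RHS]exchange_big /=.
apply: eq_bigr => i _.
pose is_max (s : 'S_n) : R := if [forall j, x j <= x (s i)] then 1 else 0.
have max_inv : prefix_invariant i is_max.
  by move=> t s; rewrite /is_max permM ext_perm_id //; apply: ltnW.
have winE (b : seq R -> R) (s : 'S_n) : (if [forall j, x j <= x (s i)] then
      (\prod_(j < i) (1 - b (take j.+1 (order_seq x s)))) * b (take i.+1 (order_seq x s))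
    else 0) = reach b i s * (b (arrivals i s) * is_max s).
  by rewrite /is_max; case: ifP => _; rewrite ?mulr1 ?mulr0.
under eq_bigr => s _ do rewrite winE.
under [RHS]eq_bigr => s _ do rewrite winE mulrA.
rewrite sum_reach_symmetrize ?(ltnW (ltn_ord i)) //; last first.
  by move=> t s; rewrite max_inv arrivals_ext_perm // symmetrize_permute ?size_arrivals.
rewrite -sum_stop_symmetrize //; apply: eq_bigr => s _; exact: mulrA.
Qed.

End WinProb.

Definition last_is_max (R : realType) (v : seq R) :=
  forall j, (j < (size v).-1)%N -> nth 0 v j < nth 0 v (size v).-1.

Lemma last_is_max_ge (R : realType) (v : seq R) :
  last_is_max v -> forall y, y \in v -> y <= nth 0 v (size v).-1.
Proof.
move=> v_max y /(nthP 0) [j jv <-]; have [->//|jl] := eqVneq j (size v).-1.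
apply/ltW/v_max; rewrite ltn_neqAle jl -ltnS prednK //.
exact: leq_ltn_trans (leq0n j) jv.
Qed.

Lemma sorted_last_is_max (R : realType) (w : seq R) : sorted <%R w -> last_is_max w.
Proof.
move=> sw j jw; apply: (sorted_ltn_nth lt_trans) => //; rewrite inE.
  by apply: leq_trans jw _; apply: leq_pred.
by rewrite ltn_predL; case: (size w) jw.
Qed.

Lemma perm_eq_last_is_max (R : realType) (v w : seq R) : perm_eq v w ->
  last_is_max v -> last_is_max w -> nth 0 v (size v).-1 = nth 0 w (size w).-1.
Proof.
move=> vw v_max w_max; have [v0|v_gt0] := posnP (size v).
  by move: (perm_size vw); rewrite v0 => /esym/size0nil ->; move/size0nil: v0 => ->.
have w_gt0 : (0 < size w)%N by rewrite -(perm_size vw).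
apply: le_anti; rewrite (last_is_max_ge w_max) ?(last_is_max_ge v_max) //.
- by rewrite (perm_mem vw) mem_nth ?ltn_predL.
- by rewrite -(perm_mem vw) mem_nth ?ltn_predL.
Qed.

Section GeometricValues.
Variable R : realType.
Variable rho : R.
Hypothesis rho_gt1 : 1 < rho.

Definition psi (k : nat) : R := rho ^+ k.

Lemma psi_lt k1 k2 : (k1 < k2)%N -> psi k1 < psi k2.
Proof. by move=> k12; rewrite /psi ltr_eXn2l. Qed.

Lemma psi_inj : injective psi.
Proof.
by move=> k1 k2 e; case: (ltngtP k1 k2) => // /psi_lt; rewrite e ltxx.
Qed.

Lemma uniq_psi_subseq (M : seq nat) (v : seq R) : sorted ltn M -> uniq v ->
  {subset v <= map psi M} ->
  exists2 T, subseq T M & perm_eq (map psi T) v.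
Proof.
move=> sM uv vM; exists (filter (fun k => psi k \in v) M); first exact: filter_subseq.
apply: uniq_perm => //.
  rewrite map_inj_uniq; last exact: psi_inj.
  by apply: filter_uniq; apply: sorted_uniq ltn_trans ltnn _ sM.
move=> y; apply/mapP/idP => [[k] | yv]; first by rewrite mem_filter => /andP[kv _] ->.
by have /mapP [k kM yk] := vM y yv; exists k; rewrite // mem_filter kM andbT -yk.
Qed.

Lemma symmetrize_psi_subseq (a : seq R -> R) (M : seq nat) (v : seq R) :
  sorted ltn M -> uniq v -> {subset v <= map psi M} -> last_is_max v ->
  exists T, [/\ subseq T M, size T = size v & symmetrize a v = symmetrize a (map psi T)].
Proof.
move=> sM uv vM v_max; have [T TM Tv] := uniq_psi_subseq sM uv vM.
exists T; split=> //; first by rewrite -(perm_size Tv) size_map.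
apply/esym/symmetrize_perm_last => //; apply: perm_eq_last_is_max => //.
apply/sorted_last_is_max; rewrite sorted_map.
by apply: sub_sorted (subseq_sorted ltn_trans TM sM) => k1 k2 /psi_lt.
Qed.

End GeometricValues.

Lemma truncn_mul_bounds (R : realType) (K : nat) (y : R) : (0 < K)%N -> 0 <= y ->
  (Num.truncn (y * K%:R))%:R / K%:R <= y < ((Num.truncn (y * K%:R))%:R + 1) / K%:R.
Proof.
move=> K_gt0 y_ge0; have K_pos : 0 < K%:R :> R by rewrite ltr0n.
have /andP[lo hi] := truncn_itv (mulr_ge0 y_ge0 (ltW K_pos)).
by rewrite ler_pdivrMr // ltr_pdivlMr // lo /= natr1.
Qed.

Section Discretization.
Variable R : realType.
Variable rho : R.
Hypothesis rho_gt1 : 1 < rho.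
Variable n : nat.
Variable a : seq R -> R.
Hypothesis a_alg : is_alg n a.
Variable K : nat.
Hypothesis K_gt0 : (0 < K)%N.

Definition sym_colour (T : seq nat) : nat :=
  Num.truncn (symmetrize a (map (psi rho) T) * K%:R).

Lemma sym_colour_below r G : (0 < r <= n)%N -> colours_below sym_colour r K.+1 G.
Proof.
move=> rn T _ sizeT; rewrite /sym_colour ltnS truncn_le_nat.
have /andP[_ sym_le1] : 0 <= symmetrize a (map (psi rho) T) <= 1.
  by apply: (symmetrize_alg a_alg); rewrite size_map sizeT.
apply: (@le_lt_trans _ _ K%:R); last by rewrite ltr_nat.
by rewrite -[leRHS]mul1r ler_wpM2r.
Qed.

Lemma value_oblivious_of_monochromatic (eps : R) (M : seq nat) :
  K%:R^-1 < eps -> sorted ltn M ->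
  (forall r, (0 < r <= n)%N -> monochromatic sym_colour r K.+1 M) ->
  value_oblivious n eps (map (psi rho) M) (symmetrize a).
Proof.
move=> K_eps sM homM i i_n; have [c c_le_K colourM] := homM i i_n.
have K_pos : 0 < K%:R :> R by rewrite ltr0n.
exists (c%:R / K%:R); split.
  by rewrite divr_ge0 //= ler_pdivrMr // mul1r ler_nat -ltnS.
move=> v sizev uv vM v_max.
have v_max' : last_is_max v by rewrite /last_is_max sizev.
have [T [TM sizeT symT]] := symmetrize_psi_subseq rho_gt1 a sM uv vM v_max'.
have /andP[sym_ge0 _] : 0 <= symmetrize a v <= 1.
  by apply: (symmetrize_alg a_alg); rewrite sizev.
have := truncn_mul_bounds K_gt0 sym_ge0.
rewrite symT -/(sym_colour T) colourM ?sizeT // -symT mulrDl mul1r => /andP[lo hi].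
have Kinv_pos : 0 < K%:R^-1 :> R by rewrite invr_gt0.
by apply/andP; split; lra.
Qed.

End Discretization.

Theorem lemma5p5 (R : realType) (rho : R) (hrho : 1 < rho)
  (eps : R) (heps : 0 < eps) (n : nat) (h : nat -> nat) (hh : (n <= h n)%N) :
  exists W : seq R,
    uniq W /\ (forall w, w \in W -> in_Psi rho w) /\
    forall (alpha : R) (a : seq R -> R),
      1 <= alpha -> is_alg n a -> prob_competitive n alpha W a ->
      exists (a' : seq R -> R) (W' : seq R),
        is_alg n a' /\ prob_competitive n alpha W a' /\
        uniq W' /\ (forall w, w \in W' -> w \in W) /\ size W' = h n /\
        value_oblivious n eps W' a'.
Proof.
set K := (Num.truncn eps^-1).+1.
have K_eps : K%:R^-1 < eps.
  by rewrite -[ltRHS]invrK ltf_pV2 ?truncnS_gt // posrE ?invr_gt0 ?ltr0n.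
have [N ramseyN] := ramsey_upto n (h n) (ltn0Sn K).
exists (map (psi rho) (iota 0 N)); split; [|split].
- by rewrite map_inj_uniq ?iota_uniq //; apply: psi_inj.
- by move=> w /mapP [k _ ->]; exists k.
move=> alpha a _ a_alg a_comp.
have [||M [MN sizeM homM]] := ramseyN (iota 0 N) (sym_colour rho a K).
- by rewrite size_iota.
- by move=> r; apply: (sym_colour_below rho a_alg).
exists (symmetrize a), (map (psi rho) M); split; [|split; [|split; [|split; [|split]]]].
- exact: symmetrize_alg.
- by move=> x x_inj xW; rewrite win_prob_symmetrize //; apply: a_comp.
- by rewrite map_inj_uniq ?(subseq_uniq MN) ?iota_uniq //; apply: psi_inj.
- by move=> w; apply: mem_subseq; apply: map_subseq.
- by rewrite size_map.
- apply: (value_oblivious_of_monochromatic hrho a_alg (ltn0Sn _) K_eps) => //.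
  exact: (subseq_sorted ltn_trans MN (iota_ltn_sorted 0 N)).
Qed.
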